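(* For every $d\in\mathbf{N}I$, the characteristic function $\chi_d$ of $R_d$ belongs to the composition algebra $\mathcal{C}$.
   Context: $Q$ is a finite quiver without oriented cycles with vertex set $I$, $r_{ij}$ arrows $i\to j$, Euler form $\langle i,j\rangle=\delta_{ij}-r_{ij}$. $\mathbf{k}$ is a finite field with $v^2$ elements. $\mathcal{H}=\bigoplus_{d\in\mathbf NI}\mathcal{H}_d$ is the Hall algebra: $\mathcal{H}_d$ is the space of $G_d$-invariant functions $R_d\to\mathbf{C}$ on the set $R_d$ of representations of dimension type $d$ (invariant under $G_d=\prod_i\mathrm{GL}_{d_i}(\mathbf k)$), with product $(f*g)(X)=v^{\langle e,d\rangle}\sum_{U\subseteq X}f(U)g(X/U)$ for $f\in\mathcal{H}_d,g\in\mathcal{H}_e$ (sum over subrepresentations; $f(U)=0$ if $\underline{\dim}U\ne d$). $\chi_d\in\mathcal H_d$ is the constant function $1$ on $R_d$. $\mathcal{C}$ is the $\mathbf{C}$-subalgebra of $\mathcal{H}$ generated by the $\chi_i$, $i\in I$ (here $i$ is viewed as the dimension type with $1$ at $i$ and $0$ elsewhere). *)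

From HB Require Import structures.
From mathcomp Require Import all_boot all_order all_algebra.

Set Implicit Arguments.
Unset Strict Implicit.
Unset Printing Implicit Defensive.

Import Order.TTheory GRing.Theory Num.Theory.
Local Open Scope ring_scope.

(* Representations use the row-vector convention: the linear map attached to
   an arrow a : i -> j is x |-> x *m X a, with X a : 'M_(d i, d j). *)

Section Hall.

Variables (I : finType) (r : I -> I -> nat).

(* arrows: r i j arrows i -> j *)
Definition arrow := {p : I * I & 'I_(r p.1 p.2)}.
Definition src (a : arrow) : I := (tag a).1.
Definition tgt (a : arrow) : I := (tag a).2.

Definition quiver_rel : rel I := fun i j => (0 < r i j)%N.

Definition acyclic : Prop :=
  forall i j : I, (0 < r i j)%N -> ~~ connect quiver_rel j i.

Definition dvec := {ffun I -> nat}.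

Definition dzero : dvec := [ffun => 0%N].
Definition dsimple (i : I) : dvec := [ffun j => nat_of_bool (j == i)].

Definition euler (a b : dvec) : int :=
  (\sum_(i : I) ((a i * b i)%N)%:Z)
  - \sum_(i : I) \sum_(j : I) ((r i j * a i * b j)%N)%:Z.

Variable F : finFieldType.

Definition rep (d : dvec) :=
  {dffun forall a : arrow, 'M[F]_(d (src a), d (tgt a))}.

Variable C : numClosedFieldType.

Definition vq : C := sqrtC (#|F|%:R).

(* functions on all representations; H_d-components are f d *)
Definition hfun := forall d : dvec, rep d -> C.

(* families of subspaces U_i of k^{d_i}, in canonical form <<U_i>> *)
Definition subsp (d : dvec) := {dffun forall i : I, 'M[F]_(d i)}.

Definition is_subrep (d : dvec) (X : rep d) (U : subsp d) : bool :=
  [forall i, U i == <<U i>>%MS] &&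
  [forall a : arrow, (U (src a) *m X a <= U (tgt a))%MS].

Definition sub_dim (d : dvec) (U : subsp d) : dvec := [ffun i => \rank (U i)].
Definition quot_dim (d : dvec) (U : subsp d) : dvec :=
  [ffun i => (d i - \rank (U i))%N].

Definition sub_iso (d : dvec) (X : rep d) (U : subsp d) (Y : rep (sub_dim U))
  : bool :=
  [exists phi : {dffun forall i : I, 'M[F]_(sub_dim U i, d i)},
    [forall i, (phi i == U i)%MS] &&
    [forall a : arrow, Y a *m phi (tgt a) == phi (src a) *m X a]].

Definition quot_iso (d : dvec) (X : rep d) (U : subsp d) (Z : rep (quot_dim U))
  : bool :=
  [exists psi : {dffun forall i : I, 'M[F]_(d i, quot_dim U i)},
    [forall i, (kermx (psi i) == U i)%MS && row_full (psi i)] &&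
    [forall a : arrow, X a *m psi (tgt a) == psi (src a) *m Z a]].

Arguments sub_iso {d} X U Y.
Arguments quot_iso {d} X U Z.

(* f(U) and f(X/U) (well defined for G-invariant f) *)
Definition eval_sub (f : hfun) (d : dvec) (X : rep d) (U : subsp d) : C :=
  if [pick Y : rep (sub_dim U) | sub_iso X U Y] is Some Y then f _ Y else 0.
Definition eval_quot (f : hfun) (d : dvec) (X : rep d) (U : subsp d) : C :=
  if [pick Z : rep (quot_dim U) | quot_iso X U Z] is Some Z then f _ Z else 0.

Definition hall_mul (f g : hfun) : hfun := fun d X =>
  \sum_(U : subsp d | is_subrep X U)
     vq ^ (euler (quot_dim U) (sub_dim U)) * eval_sub f X U * eval_quot g X U.

Definition hall_add (f g : hfun) : hfun := fun d X => f d X + g d X.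
Definition hall_scale (c : C) (f : hfun) : hfun := fun d X => c * f d X.

Definition chi (e : dvec) : hfun := fun d _ => if d == e then 1 else 0.

Inductive in_comp : hfun -> Prop :=
| comp_gen (i : I) : in_comp (chi (dsimple i))
| comp_one : in_comp (chi dzero)
| comp_add f g : in_comp f -> in_comp g -> in_comp (hall_add f g)
| comp_scale (c : C) f : in_comp f -> in_comp (hall_scale c f)
| comp_mul f g : in_comp f -> in_comp g -> in_comp (hall_mul f g)
| comp_ext f g : in_comp f -> (forall d X, f d X = g d X) -> in_comp g.

End Hall.

From HB Require Import structures.
From mathcomp Require Import all_boot all_order all_algebra.
From mathcomp Require Import zify.

Set Implicit Arguments.
Unset Strict Implicit.
Unset Printing Implicit Defensive.

Import Order.TTheory GRing.Theory Num.Theory.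
Local Open Scope ring_scope.

(* Induction on the total dimension of d.  Acyclicity provides a vertex i with
   d_i > 0 all of whose arrows end at vertices j with d_j = 0.  Then a family
   of subspaces with dimension vector i and codimension d - i is the same as a
   line of k^{d_i} placed at i, and every such line is a subrepresentation of
   every X in R_d.  Hence chi_i * chi_{d-i} = N v^{<d-i,i>} chi_d, where N > 0
   is the number of lines of k^{d_i}, so chi_d lies in C once chi_{d-i} does. *)

Lemma dffun_choice (I : finType) (T : I -> choiceType) (P : forall i, pred (T i)) :
  (forall i, exists x, P i x) -> exists f : {dffun forall i, T i}, forall i, P i (f i).
Proof.
by move=> exP; exists [ffun i => xchoose (exP i)] => i; rewrite ffunE; apply: xchooseP.
Qed.

Lemma exists_row_full_kermx (F : fieldType) n (U : 'M[F]_n) :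
  exists psi : 'M[F]_(n, n - \rank U), (kermx psi == U)%MS && row_full psi.
Proof.
set K := cokermx U.
suff factor_K q (cb : 'M[F]_(n, q)) (rb : 'M_(q, n)) : q = (n - \rank U)%N ->
    cb *m rb = K -> row_full cb -> row_free rb ->
    exists psi : 'M[F]_(n, n - \rank U), (kermx psi == U)%MS && row_full psi.
  exact: factor_K (mxrank_coker U) (mulmx_base K) (col_base_full K) (row_base_free K).
move=> eq_q eK cb_full rb_free; subst q; exists cb; rewrite cb_full andbT.
apply/andP; split; first by rewrite submxE -/K -eK mulmxA mulmx_ker mul0mx.
rewrite sub_kermx; apply/eqP/(row_free_inj rb_free).
by rewrite mul0mx -mulmxA eK; apply/eqP; rewrite -submxE.
Qed.

Section SubQuotient.
Variables (I : finType) (r : I -> I -> nat) (F : finFieldType) (C : numClosedFieldType).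
Variables (d : dvec I) (X : rep r F d) (U : subsp F d).
Hypothesis U_subrep : is_subrep X U.

Let U_inv a : (U (src a) *m X a <= U (tgt a))%MS.
Proof. by case/andP: U_subrep => _ /forallP. Qed.

Lemma exists_sub_iso : exists Y, @sub_iso _ _ _ _ X U Y.
Proof.
have [phi phiU] : exists phi : {dffun forall i, 'M[F]_(sub_dim U i, d i)},
    forall i, (phi i == U i)%MS.
  apply: (dffun_choice (P := fun i M => (M == U i)%MS)) => i.
  rewrite /sub_dim ffunE.
  by exists (row_base (U i)); apply/eqmxP/eq_row_base.
pose Y a := phi (src a) *m X a *m pinvmx (phi (tgt a)).
exists [ffun a => Y a]; apply/existsP; exists phi; apply/andP; split.
  exact/forallP.
apply/forallP => a; rewrite (ffunE Y) mulmxKpV //.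
by rewrite (eqmxMr _ (eqmxP (phiU _))) (eqmxP (phiU _)).
Qed.

Lemma exists_quot_iso : exists Z, @quot_iso _ _ _ _ X U Z.
Proof.
have [psi psiU] : exists psi : {dffun forall i, 'M[F]_(d i, quot_dim U i)},
    forall i, (kermx (psi i) == U i)%MS && row_full (psi i).
  apply: (dffun_choice (P := fun i M => (kermx M == U i)%MS && row_full M)) => i.
  by rewrite /quot_dim ffunE; apply: exists_row_full_kermx.
pose Z a := pinvmx (psi (src a)) *m X a *m psi (tgt a).
exists [ffun a => Z a]; apply/existsP; exists psi; apply/andP; split.
  exact/forallP.
apply/forallP => a; rewrite (ffunE Z) 2!mulmxA.
have /andP[kerU_s psi_s_full] := psiU (src a); have /andP[kerU_t _] := psiU (tgt a).
(* rows of [1 - psi_s pinv(psi_s)] lie in [ker psi_s = U_s],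
   which [X a] maps into [U_t = ker psi_t] *)
have : ((1%:M - psi (src a) *m pinvmx (psi (src a))) *m X a <= kermx (psi (tgt a)))%MS.
  rewrite (eqmxP kerU_t); apply: submx_trans (U_inv a); apply: submxMr.
  rewrite -(eqmxP kerU_s); apply/sub_kermxP.
  by rewrite mulmxBl mul1mx -mulmxA mulVpmx // mulmx1 subrr.
by move/sub_kermxP; rewrite !mulmxBl !mul1mx => /eqP; rewrite subr_eq0.
Qed.

Lemma eval_sub_chi e : eval_sub (chi C e) X U = (sub_dim U == e)%:R.
Proof.
rewrite /eval_sub; case: pickP => [Y _ | noY]; first by rewrite /chi; case: eqP.
by have [Y] := exists_sub_iso; rewrite noY.
Qed.

Lemma eval_quot_chi e : eval_quot (chi C e) X U = (quot_dim U == e)%:R.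
Proof.
rewrite /eval_quot; case: pickP => [Z _ | noZ]; first by rewrite /chi; case: eqP.
by have [Z] := exists_quot_iso; rewrite noZ.
Qed.

End SubQuotient.

Section Sink.
Variables (I : finType) (r : I -> I -> nat).
Hypothesis acyc : acyclic r.

Lemma exists_sink (P : pred I) i0 : P i0 ->
  exists2 i, P i & forall j, (0 < r i j)%N -> ~~ P j.
Proof.
move=> Pi0; pose reach x := #|[set k | connect (quiver_rel r) x k]|.
have [i Pi reach_min] := arg_minnP reach Pi0.
exists i => // j rij; apply/negP => /reach_min; apply/negP; rewrite -ltnNge.
(* by acyclicity, [i] is reachable from itself but not from its successor [j] *)
apply/proper_card/properP; split.
  apply/subsetP => k; rewrite !inE; apply: connect_trans; exact: connect1.
by exists i; rewrite !inE ?connect0 //; apply: acyc.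
Qed.

End Sink.

Section DimensionVectors.
Variable I : finType.
Implicit Type d : dvec I.

Definition dpred d (i : I) : dvec I := [ffun j => (d j - (j == i))%N].

Definition dsize d := (\sum_j d j)%N.

Lemma dsize_dpred d i : (0 < d i)%N -> (dsize (dpred d i) < dsize d)%N.
Proof.
move=> di_gt0; rewrite /dsize (bigD1 i) //= [X in (_ < X)%N](bigD1 i) //=.
rewrite ffunE eqxx subn1 (eq_bigr d) ?ltn_add2r ?ltn_predL // => j /negbTE j_i.
by rewrite ffunE j_i subn0.
Qed.

Lemma dzero_or_support d : d = dzero I \/ exists i, (0 < d i)%N.
Proof.
case: (pickP (fun j => 0 < d j)%N) => [i di | d0]; first by right; exists i.
by left; apply/ffunP => j; rewrite ffunE; apply/eqP; rewrite -leqn0 leqNgt d0.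
Qed.

End DimensionVectors.

Section SinkStep.
Variables (I : finType) (r : I -> I -> nat) (F : finFieldType) (C : numClosedFieldType).
Variables (d : dvec I) (i : I).
Hypothesis di_gt0 : (0 < d i)%N.
Hypothesis i_sink : forall j, (0 < r i j)%N -> d j = 0%N.

Definition line_subsp D (U : subsp F D) : bool :=
  [&& [forall j, U j == <<U j>>%MS], sub_dim U == dsimple i & quot_dim U == dpred d i].

Lemma line_subsp_dim D (U : subsp F D) :
  sub_dim U = dsimple i -> quot_dim U = dpred d i -> D = d.
Proof.
move=> /ffunP sub_i /ffunP quot_i; apply/ffunP => j.
move: (sub_i j) (quot_i j) (rank_leq_col (U j)); rewrite !ffunE.
by case: eqP => [->|_] /=; lia.
Qed.

(* [U] lives at the sink [i], whose arrows all end at zero spaces. *)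
Lemma is_subrep_line D (X : rep r F D) (U : subsp F D) :
  sub_dim U = dsimple i -> quot_dim U = dpred d i ->
  is_subrep X U = [forall j, U j == <<U j>>%MS].
Proof.
move=> sub_i quot_i; have eD := line_subsp_dim sub_i quot_i; subst D.
apply: andb_idr => _; apply/forallP => a.
case: (eqVneq (src a) i) => [src_i | src_ni].
  have /i_sink tgt0 : (0 < r i (tgt a))%N.
    by rewrite -src_i (leq_ltn_trans _ (ltn_ord (tagged a))).
  by move: (U (src a) *m X a) (U (tgt a)); rewrite tgt0 => A B; rewrite thinmx0 sub0mx.
move/ffunP: sub_i => /(_ (src a)); rewrite !ffunE (negbTE src_ni) => /eqP.
by rewrite mxrank_eq0 => /eqP ->; rewrite mul0mx sub0mx.
Qed.

Definition line_weight : C :=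
  \sum_(U : subsp F d | line_subsp U) vq F C ^ euler r (dpred d i) (dsimple i).

Lemma hall_mul_chi_line D (X : rep r F D) :
  hall_mul (chi C (dsimple i)) (chi C (dpred d i)) X = line_weight * chi C d X.
Proof.
rewrite /hall_mul (eq_bigr (fun U => vq F C ^ euler r (quot_dim U) (sub_dim U)
    * (sub_dim U == dsimple i)%:R * (quot_dim U == dpred d i)%:R)); last first.
  by move=> U U_subrep; rewrite eval_sub_chi // eval_quot_chi.
rewrite big_mkcond (eq_bigr (fun U => if line_subsp U
    then vq F C ^ euler r (dpred d i) (dsimple i) else 0)) => [|U _]; last first.
  rewrite /line_subsp; case: eqP => [sub_i|]; case: eqP => [quot_i|];
    rewrite ?mulr0 ?mul0r ?andbF ?if_same //.
  by rewrite is_subrep_line // sub_i quot_i !andbT !mulr1.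
rewrite -big_mkcond /chi; case: eqP => [-> | D_nd]; first by rewrite mulr1.
rewrite mulr0 big_pred0 // => U; apply/negP => /and3P[_ /eqP sub_i /eqP quot_i].
exact/D_nd/(line_subsp_dim sub_i quot_i).
Qed.

Definition line0 : subsp F d :=
  [ffun j => if j == i then <<pid_mx 1 : 'M[F]_(d j)>>%MS else 0].

Lemma line_subsp0 : line_subsp line0.
Proof.
apply/and3P; split; [apply/forallP => j | apply/eqP/ffunP => j..];
  rewrite !ffunE; case: (eqVneq j i) => [->|_];
  rewrite ?genmx_id ?genmx0 ?genmxE ?rank_pid_mx ?mxrank0 //.
Qed.

Lemma line_weight_gt0 : 0 < line_weight.
Proof.
have vq_gt0 : 0 < vq F C by rewrite sqrtC_gt0 ltr0n; apply/card_gt0P; exists 0.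
rewrite /line_weight (bigD1 line0 line_subsp0) /= ltr_wpDr ?exprz_gt0 //.
by apply: sumr_ge0 => U _; rewrite ltW ?exprz_gt0.
Qed.

Lemma in_comp_chi_sink :
  in_comp (@chi I r F C (dpred d i)) -> in_comp (@chi I r F C d).
Proof.
move=> comp_d'.
apply: comp_ext (comp_scale line_weight^-1 (comp_mul (comp_gen r F C i) comp_d')) _.
move=> D X; rewrite /hall_scale hall_mul_chi_line mulrA mulVf ?mul1r //.
by rewrite gt_eqF ?line_weight_gt0.
Qed.

End SinkStep.

Theorem mainTheorem6 (I : finType) (r : I -> I -> nat) (acyc : acyclic r)
  (F : finFieldType) (C : numClosedFieldType) (d : dvec I) :
  @in_comp I r F C (@chi I r F C d).
Proof.
elim: {d}(dsize d).+1 {-2}d (ltnSn (dsize d)) => // n IH d d_small.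
have [-> | [i0 di0]] := dzero_or_support d; first exact: comp_one.
have [i di_gt0 i_sink] := @exists_sink _ _ acyc (fun j => 0 < d j)%N _ di0.
apply: (in_comp_chi_sink di_gt0) => [j /i_sink | ]; first by rewrite lt0n negbK => /eqP.
by apply/IH/(leq_trans (dsize_dpred di_gt0)); rewrite -ltnS.
Qed.
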